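(* Let $D$ be a principal ideal domain, $\alpha\in D$ a prime element, $n\ge1$, and $\overline{D}:=D/(\alpha^n)$. Let $1\leqslant j\leqslant r$, let $M$ be a free $\overline{D}$-module with basis $e_1,\dots,e_r$, and let $N=\bigoplus_{i=1}^jx_i\overline{D}$ be a submodule of $M$ (an internal direct sum) with $x_i\in M$ and $\mathrm{Ann}(x_i)=(\alpha^{n_i})/(\alpha^n)\neq\overline{D}$ for $i=1,\dots,j$. Then $M/N\cong\bigoplus_{i=1}^rD/(\alpha^{n-n_i})$, where $n_i:=0$ for $j<i\leq r$. *)

From HB Require Import structures.
From mathcomp Require Import all_boot all_order all_algebra.
Set Implicit Arguments. Unset Strict Implicit. Unset Printing Implicit Defensive.
Import Order.TTheory GRing.Theory Num.Theory.
Local Open Scope ring_scope.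

Definition dvdD (D : comRingType) (a b : D) : Prop := exists c : D, b = c * a.

Definition is_ideal (D : comRingType) (I : D -> Prop) : Prop :=
  [/\ I 0, (forall x y, I x -> I y -> I (x + y)) & (forall r x, I x -> I (r * x))].

Definition is_PID (D : idomainType) : Prop :=
  forall I : D -> Prop, is_ideal I -> exists a : D, forall x, I x <-> dvdD a x.

Definition prime_elt (D : idomainType) (p : D) : Prop :=
  [/\ p != 0, p \isn't a GRing.unit &
      forall a b : D, dvdD p (a * b) -> dvdD p a \/ dvdD p b].

(* Since alpha^(n_i) kills x_i and M is free over D/(alpha^n), every x_i is of
   the form alpha^(n - n_i) z_i.  The z_i extend to a basis of M by exchange:
   the coordinates of z_t outside the z_k already placed cannot all be
   divisible by alpha, for then alpha^(n-1) z_t = alpha^(n_t - 1) x_t would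
   lie in the span of the earlier x_k, contradicting directness.  In a basis y
   with y_i = z_i for i < j, N is spanned by the alpha^(n - n_i) y_i, and both
   M/N and the direct sum of the D/(alpha^(n - n_i)) are the image of the map
   scaling the i-th coordinate by alpha^(n_i). *)

From HB Require Import structures.
From mathcomp Require Import all_boot all_order all_algebra all_fingroup.
From mathcomp Require Import boolp ring zify.
Set Implicit Arguments. Unset Strict Implicit. Unset Printing Implicit Defensive.
Import Order.TTheory GRing.Theory Num.Theory.
Local Open Scope ring_scope.

Section ImageModule.
Variables (R : pzRingType) (U V : lmodType R) (g : {linear U -> V}).

Definition image_pred : pred V := fun v => `[< exists u, v = g u >].

Lemma image_pred_mem u : g u \in image_pred.
Proof. by apply/asboolP; exists u. Qed.

Lemma image_pred_submod_closed : subsemimod_closed image_pred.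
Proof.
split; [split|].
- by apply/asboolP; exists 0; rewrite linear0.
- move=> _ _ /asboolP[u1 ->] /asboolP[u2 ->].
  by apply/asboolP; exists (u1 + u2); rewrite linearD.
- move=> a _ /asboolP[u ->].
  by apply/asboolP; exists (a *: u); rewrite linearZ.
Qed.

HB.instance Definition _ :=
  GRing.isSubmodClosed.Build R V image_pred image_pred_submod_closed.

Inductive image_mod : predArgType := ImageMod v of v \in image_pred.
Definition image_val (p : image_mod) : V := let: ImageMod v _ := p in v.
HB.instance Definition _ := [isSub for image_val].
HB.instance Definition _ := [Choice of image_mod by <:].
HB.instance Definition _ := [SubChoice_isSubLmodule of image_mod by <:].

Lemma image_mod_eq0 (p : image_mod) : p = 0 <-> image_val p = 0.
Proof. by split=> [->//|p0]; apply: val_inj. Qed.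

Section Lift.
Variables (W : lmodType R) (h : {linear W -> V}) (h_im : forall w, h w \in image_pred).

Definition image_lift (w : W) : image_mod := ImageMod (h_im w).

Lemma image_lift_linear : linear image_lift.
Proof. by move=> a w1 w2; apply: val_inj; rewrite /= linearP. Qed.

HB.instance Definition _ := GRing.isSemilinear.Build R W image_mod _ image_lift
  (GRing.semilinear_linear image_lift_linear).

End Lift.

Definition corestr : U -> image_mod := image_lift image_pred_mem.

Lemma corestr_surj (p : image_mod) : exists u, corestr u = p.
Proof. by case: p => v /[dup] /asboolP[u ->] vP; exists u; apply: val_inj. Qed.

End ImageModule.

Section Divisibility.
Variable D : idomainType.
Implicit Types a b c d : D.

Lemma dvdD_refl a : dvdD a a. Proof. by exists 1; rewrite mul1r. Qed.

Lemma dvdD_mull a b c : dvdD a b -> dvdD a (c * b).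
Proof. by case=> t ->; exists (c * t); rewrite mulrA. Qed.

Lemma dvdD_add a b c : dvdD a b -> dvdD a c -> dvdD a (b + c).
Proof. by case=> t -> [s ->]; exists (t + s); rewrite mulrDl. Qed.

Lemma dvdD_opp a b : dvdD a b -> dvdD a (- b).
Proof. by case=> t ->; exists (- t); rewrite mulNr. Qed.

Lemma dvdD_exp_cancel a c (k m : nat) : a != 0 -> (k <= m)%N ->
  dvdD (a ^+ m) (c * a ^+ k) -> dvdD (a ^+ (m - k)) c.
Proof.
move=> a0 km [t ct]; exists t; apply: (mulIf (expf_neq0 k a0)).
by rewrite /= -mulrA -exprD subnK.
Qed.

Lemma dvdD_exp_leq a (k m : nat) : a != 0 -> a \isn't a GRing.unit ->
  dvdD (a ^+ k) (a ^+ m) -> (k <= m)%N.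
Proof.
move=> a0 /negP aNunit [t tk]; rewrite leqNgt; apply/negP => mk.
apply: aNunit; apply/unitrPr; exists (t * a ^+ (k - m.+1)).
apply: (mulIf (expf_neq0 m a0)).
rewrite /= mul1r -!mulrA -exprD mulrCA -exprS tk.
by have -> : (k - m.+1 + m).+1 = k by lia.
Qed.

End Divisibility.

Section PrimeElement.
Variables (D : idomainType) (hPID : is_PID D) (alpha : D).
Hypothesis halpha : prime_elt alpha.

Lemma prime_elt_neq0 : alpha != 0. Proof. by case: halpha. Qed.

Lemma prime_elt_bezout (c : D) : ~ dvdD alpha c ->
  exists u w, u * c + w * alpha = 1.
Proof.
move=> alphaNc.
pose I x := exists u w, x = u * c + w * alpha.
have I_ideal : is_ideal I.
  split; first by exists 0, 0; rewrite !mul0r addr0.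
    move=> _ _ [u1 [w1 ->]] [u2 [w2 ->]]; exists (u1 + u2), (w1 + w2).
    by rewrite !mulrDl addrACA.
  by move=> t _ [u [w ->]]; exists (t * u), (t * w); rewrite mulrDr !mulrA.
have [d Id] := hPID I_ideal.
have [u [w d_def]] : I d by apply/Id/dvdD_refl.
have [q alpha_qd] : dvdD d alpha by apply/Id; exists 0, 1; rewrite mul0r add0r mul1r.
have [s c_sd] : dvdD d c by apply/Id; exists 1, 0; rewrite mul1r mul0r addr0.
(* alpha = q d is prime: either alpha | q and d is a unit, or alpha | d | c. *)
case: halpha => _ _ /(_ q d); rewrite -alpha_qd => /(_ (dvdD_refl _)) [[t q_ta]|[t d_ta]].
  have td1 : t * d = 1.
    apply: (mulIf prime_elt_neq0).
    by rewrite /= mul1r [in RHS]alpha_qd q_ta mulrAC.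
  by exists (t * u), (t * w); rewrite -!mulrA -mulrDr -d_def td1.
by case: alphaNc; exists (s * t); rewrite c_sd d_ta mulrA.
Qed.

Lemma prime_elt_inv_mod_exp (n : nat) (c : D) : ~ dvdD alpha c ->
  exists u, dvdD (alpha ^+ n) (u * c - 1).
Proof.
move=> /prime_elt_bezout [u [w uw1]].
(* u c = 1 - w alpha has inverse sum_(i < n) (w alpha)^i modulo alpha^n *)
exists (u * \sum_(i < n) (w * alpha) ^+ i), (- w ^+ n).
set S := \sum_(i < n) _.
have -> : u * S * c - 1 = - ((w * alpha - 1) * S) - 1.
  by rewrite mulrAC (_ : u * c = - (w * alpha - 1)) ?mulNr // -uw1; ring.
by rewrite -subrX1 exprMn; ring.
Qed.

Lemma prime_elt_dvd_exp_cancel (n : nat) (c d : D) : ~ dvdD alpha c ->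
  dvdD (alpha ^+ n) (d * c) -> dvdD (alpha ^+ n) d.
Proof.
move=> /(prime_elt_inv_mod_exp n) [u uc1] dc.
have -> : d = u * (d * c) - d * (u * c - 1) by ring.
by apply: dvdD_add; [apply: dvdD_mull | apply/dvdD_opp/dvdD_mull].
Qed.

End PrimeElement.

Section FreeQuotientModule.
Variables (D : idomainType) (alpha : D) (n : nat) (M : lmodType D).
Hypothesis hMbar : forall m : M, alpha ^+ n *: m = 0.
Variable r : nat.

Definition is_basis (y : 'I_r -> M) : Prop :=
  (forall m, exists c : 'I_r -> D, m = \sum_i c i *: y i) /\
  (forall c : 'I_r -> D, \sum_i c i *: y i = 0 -> forall i, dvdD (alpha ^+ n) (c i)).

Lemma scale_dvd_exp_eq0 (a : D) (m : M) : dvdD (alpha ^+ n) a -> a *: m = 0.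
Proof. by case=> t ->; rewrite -scalerA hMbar scaler0. Qed.

Lemma is_basis_perm (y : 'I_r -> M) (s : {perm 'I_r}) :
  is_basis y -> is_basis (y \o s).
Proof.
case=> y_span y_indep; split=> [m|c].
  by have [c ->] := y_span m; exists (c \o s); rewrite (reindex_perm s).
move=> /= cs0 i; have := y_indep (c \o s^-1)%g _ (s i); rewrite /= permK; apply.
by rewrite (reindex_perm s) -[RHS]cs0; apply: eq_bigr => k _ /=; rewrite permK.
Qed.

Lemma basis_coord_dvd (y : 'I_r -> M) (c d : 'I_r -> D) : is_basis y ->
  \sum_i c i *: y i = \sum_i d i *: y i -> forall i, dvdD (alpha ^+ n) (c i - d i).
Proof.
case=> _ y_indep cd; apply: y_indep.
by under eq_bigr do rewrite scalerBl; rewrite sumrB cd subrr.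
Qed.

Lemma basis_coord_scale (y : 'I_r -> M) (c d b : 'I_r -> D) : is_basis y ->
  \sum_i c i *: y i = \sum_i d i *: y i ->
  \sum_i (c i * b i) *: y i = \sum_i (d i * b i) *: y i.
Proof.
move=> hy /(basis_coord_dvd hy) cd; apply/eqP; rewrite -subr_eq0 -sumrB.
apply/eqP/big1 => i _; rewrite -scalerBl -mulrBl mulrC.
exact/scale_dvd_exp_eq0/dvdD_mull.
Qed.

Section Exchange.
Hypotheses (hPID : is_PID D) (halpha : prime_elt alpha).

Lemma is_basis_exchange (y : 'I_r -> M) (c : 'I_r -> D) (p : 'I_r) :
  is_basis y -> ~ dvdD alpha (c p) ->
  is_basis (fun i => if i == p then \sum_k c k *: y k else y i).
Proof.
move=> [y_span y_indep] alphaNcp; set z := \sum_k c k *: y k.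
have combE (d : 'I_r -> D) : \sum_i d i *: (if i == p then z else y i) =
    \sum_i (d p * c i + (if i == p then 0 else d i)) *: y i.
  under [RHS]eq_bigr do rewrite scalerDl.
  rewrite big_split /=.
  have -> : \sum_i (d p * c i) *: y i = d p *: z.
    by rewrite /z scaler_sumr; apply: eq_bigr => i _; rewrite scalerA.
  rewrite [LHS](bigD1 p) // [X in _ + X](bigD1 p) //= !eqxx scale0r add0r.
  by congr (_ + _); apply: eq_bigr => i /negPf ->.
split=> [m|d].
  have [u uc1] := prime_elt_inv_mod_exp hPID halpha n alphaNcp.
  have [d ->] := y_span m.
  exists (fun i => if i == p then d p * u else d i - d p * u * c i).
  rewrite combE eqxx; apply: eq_bigr => i _.
  case: eqP => [->|_]; last by rewrite addrC subrK.
  apply/eqP; rewrite -subr_eq0 -scalerBl; apply/eqP/scale_dvd_exp_eq0.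
  by rewrite (_ : _ - _ = - (d p * (u * c p - 1))); [exact/dvdD_opp/dvdD_mull | ring].
rewrite combE => /y_indep dvd_coef i.
have dvd_dp : dvdD (alpha ^+ n) (d p).
  by apply: (prime_elt_dvd_exp_cancel hPID halpha alphaNcp); have := dvd_coef p; rewrite eqxx addr0.
have [->//|ip] := eqVneq i p.
have := dvd_coef i; rewrite (negPf ip) => dvd_i.
rewrite (_ : d i = (d p * c i + d i) - c i * d p); last by ring.
by apply: dvdD_add => //; apply/dvdD_opp/dvdD_mull.
Qed.

End Exchange.

Section ScaledCoordinates.
Hypothesis alpha0 : alpha != 0.
Variables (y : 'I_r -> M) (hy : is_basis y).

Lemma basis_ann_exp (k : nat) (m : M) : (k <= n)%N -> alpha ^+ k *: m = 0 ->
  exists z, m = alpha ^+ (n - k) *: z.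
Proof.
move=> kn akm; have [c mc] := hy.1 m.
have dvd_c i : dvdD (alpha ^+ (n - k)) (c i).
  apply: dvdD_exp_cancel alpha0 kn _; rewrite mulrC.
  apply: (hy.2 (fun i => alpha ^+ k * c i) _ i).
  by rewrite -[RHS]akm mc scaler_sumr; apply: eq_bigr => i' _; rewrite scalerA.
exists (\sum_i sval (cid (dvd_c i)) *: y i).
rewrite mc scaler_sumr; apply: eq_bigr => i _.
by rewrite scalerA mulrC -(svalP (cid (dvd_c i))).
Qed.

Variables (w : 'I_r -> nat) (hw : forall i, (w i <= n)%N).

Definition scaled_comb (v : 'rV[D]_r) : M := \sum_i (v ord0 i * alpha ^+ w i) *: y i.

Lemma scaled_comb_linear : linear scaled_comb.
Proof.
move=> a u v; rewrite /scaled_comb scaler_sumr -big_split; apply: eq_bigr => i _.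
by rewrite !mxE /= scalerA -scalerDl; congr (_ *: _); ring.
Qed.

HB.instance Definition _ := GRing.isSemilinear.Build D 'rV[D]_r M _ scaled_comb
  (GRing.semilinear_linear scaled_comb_linear).

Lemma scaled_comb_eq0 (v : 'rV[D]_r) :
  scaled_comb v = 0 <-> forall i, dvdD (alpha ^+ (n - w i)) (v ord0 i).
Proof.
split=> [/hy.2 dvd_v i | dvd_v].
  exact: dvdD_exp_cancel alpha0 (hw i) (dvd_v i).
apply: big1 => i _; apply: scale_dvd_exp_eq0.
by have [t ->] := dvd_v i; exists t; rewrite -mulrA -exprD subnK.
Qed.

Definition basis_coord (m : M) : 'I_r -> D := sval (cid (hy.1 m)).

Lemma basis_coordK (m : M) : m = \sum_i basis_coord m i *: y i.
Proof. exact: svalP (cid (hy.1 m)). Qed.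

(* Linear although basis_coord is not: coordinates are unique modulo alpha^n. *)
Definition scale_coord (m : M) : M := scaled_comb (\row_i basis_coord m i).

Lemma scale_coordE (m : M) (c : 'I_r -> D) : m = \sum_i c i *: y i ->
  scale_coord m = scaled_comb (\row_i c i).
Proof.
move=> mc; rewrite /scale_coord /scaled_comb.
under eq_bigr do rewrite mxE; under [RHS]eq_bigr do rewrite mxE.
by apply: basis_coord_scale hy _; rewrite -basis_coordK.
Qed.

Lemma scale_coord_linear : linear scale_coord.
Proof.
move=> a m1 m2.
rewrite (@scale_coordE _ (fun i => a * basis_coord m1 i + basis_coord m2 i)).
  rewrite -scaled_comb_linear; congr scaled_comb.
  by apply/rowP => i; rewrite !mxE.
rewrite {1}(basis_coordK m1) {1}(basis_coordK m2) scaler_sumr -big_split.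
by apply: eq_bigr => i _; rewrite scalerDl scalerA.
Qed.

HB.instance Definition _ := GRing.isSemilinear.Build D M M _ scale_coord
  (GRing.semilinear_linear scale_coord_linear).

Lemma scale_coord_eq0 (m : M) : scale_coord m = 0 <->
  exists t : 'I_r -> D, m = \sum_i (t i * alpha ^+ (n - w i)) *: y i.
Proof.
split=> [|[t mt]]; last first.
  rewrite (scale_coordE mt) scaled_comb_eq0 => i.
  by rewrite mxE; exists (t i).
rewrite (scale_coordE (basis_coordK m)) scaled_comb_eq0 => dvd_c.
have {}dvd_c i : dvdD (alpha ^+ (n - w i)) (basis_coord m i) by have := dvd_c i; rewrite mxE.
exists (fun i => sval (cid (dvd_c i))); rewrite {1}(basis_coordK m).
by apply: eq_bigr => i _; rewrite -(svalP (cid (dvd_c i))).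
Qed.

Lemma scale_coord_in_image (m : M) : scale_coord m \in image_pred scaled_comb.
Proof. exact: image_pred_mem. Qed.

Theorem scaled_basis_quotient :
  exists (P : lmodType D) (f : {linear M -> P}) (g : {linear 'rV[D]_r -> P}),
    [/\ (forall p : P, exists m : M, f m = p),
        (forall m : M, f m = 0 <->
           exists t : 'I_r -> D, m = \sum_i (t i * alpha ^+ (n - w i)) *: y i),
        (forall p : P, exists v : 'rV[D]_r, g v = p) &
        (forall v : 'rV[D]_r, g v = 0 <->
           forall i, dvdD (alpha ^+ (n - w i)) (v ord0 i))].
Proof.
exists (image_mod scaled_comb), (image_lift scale_coord_in_image), (corestr scaled_comb).
split=> [p|m|p|v]; rewrite ?image_mod_eq0 /=.
- have [v <-] := corestr_surj p; exists (\sum_i v ord0 i *: y i).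
  apply: val_inj; rewrite /= (scale_coordE (erefl _)); congr scaled_comb.
  by apply/rowP => i; rewrite mxE.
- exact: scale_coord_eq0.
- exact: corestr_surj.
- exact: scaled_comb_eq0.
Qed.

End ScaledCoordinates.

End FreeQuotientModule.

Section DirectSumInFreeModule.
Variables (D : idomainType) (hPID : is_PID D) (alpha : D).
Hypothesis halpha : prime_elt alpha.
Variables (n : nat) (M : lmodType D).
Hypothesis hMbar : forall m : M, alpha ^+ n *: m = 0.
Variables (r j : nat) (x : 'I_r -> M) (nn : 'I_r -> nat).
Hypothesis hann : forall i : 'I_r, (i < j)%N ->
  forall d : D, d *: x i = 0 <-> dvdD (alpha ^+ nn i) d.
Hypothesis hann_proper : forall i : 'I_r, (i < j)%N -> ~ (forall d : D, d *: x i = 0).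
Hypothesis hdirect : forall c : 'I_r -> D,
  \sum_(i < r | (i < j)%N) c i *: x i = 0 -> forall i : 'I_r, (i < j)%N -> c i *: x i = 0.

Lemma ann_exp_gt0 (i : 'I_r) : (i < j)%N -> (0 < nn i)%N.
Proof.
move=> ij; rewrite lt0n; apply/eqP => nn0; apply: (hann_proper ij) => d.
by apply/(hann ij); rewrite nn0 expr0; exists d; rewrite mulr1.
Qed.

Lemma ann_exp_leq (i : 'I_r) : (i < j)%N -> (nn i <= n)%N.
Proof.
move=> ij; case: halpha => alpha0 alphaNunit _.
exact/(dvdD_exp_leq alpha0 alphaNunit)/(hann ij).
Qed.

Lemma direct_sum_prefix_eq0 (T : 'I_r) (d : D) (c : 'I_r -> D) : (T < j)%N ->
  d *: x T = \sum_(k < r | (k < T)%N) c k *: x k -> d *: x T = 0.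
Proof.
move=> Tj dxT.
pose c' k := if k == T then d else if (k < T)%N then - c k else 0.
have := hdirect (c := c') _ Tj; rewrite /c' eqxx; apply.
rewrite (bigD1 T) //= eqxx dxT addrC; apply/eqP; rewrite addr_eq0 -sumrN.
apply/eqP; rewrite big_mkcond [RHS]big_mkcond /=.
apply: eq_bigr => k _; have [kT|Tk] := ltnP k T; last first.
  by case: ifP => // /andP[_ /negPf ->]; rewrite scale0r.
by rewrite (ltn_trans kT Tj) -val_eqE (ltn_eqF kT) scaleNr.
Qed.

Variable z : 'I_r -> M.
Hypothesis hz : forall i : 'I_r, (i < j)%N -> x i = alpha ^+ (n - nn i) *: z i.

Lemma scale_exp_pred_z (i : 'I_r) : (i < j)%N ->
  alpha ^+ n.-1 *: z i = alpha ^+ (nn i).-1 *: x i.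
Proof.
move=> ij; have := ann_exp_gt0 ij; have := ann_exp_leq ij => nn_le nn_gt0.
by rewrite hz // scalerA -exprD; congr (_ ^+ _ *: _); lia.
Qed.

Lemma exists_coord_coprime (y : 'I_r -> M) (T : 'I_r) (c : 'I_r -> D) :
  (T < j)%N -> (forall k : 'I_r, (k < T)%N -> y k = z k) ->
  z T = \sum_k c k *: y k -> exists2 p : 'I_r, (T <= p)%N & ~ dvdD alpha (c p).
Proof.
move=> Tj yz zc; apply: contrapT => no_coprime.
have alpha_c (p : 'I_r) : (T <= p)%N -> dvdD alpha (c p).
  by move=> Tp; apply: contrapT => alphaNc; apply: no_coprime; exists p.
have zT_prefix : alpha ^+ n.-1 *: z T =
    \sum_(k < r | (k < T)%N) (c k * alpha ^+ (nn k).-1) *: x k.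
  rewrite zc scaler_sumr [RHS]big_mkcond; apply: eq_bigr => k _ /=.
  case: ltnP => [kT | /alpha_c [s ->]].
    by rewrite yz // -scalerA -scale_exp_pred_z ?(ltn_trans kT Tj) // !scalerA mulrC.
  rewrite scalerA; apply: scale_dvd_exp_eq0 => //; exists s.
  by rewrite mulrCA -exprSr prednK // (leq_trans (ann_exp_gt0 Tj) (ann_exp_leq Tj)).
rewrite scale_exp_pred_z // in zT_prefix.
move/(direct_sum_prefix_eq0 Tj)/(hann Tj): zT_prefix.
case: halpha => alpha0 alphaNunit _ /(dvdD_exp_leq alpha0 alphaNunit).
by rewrite -ltnS prednK ?ltnn // ann_exp_gt0.
Qed.

Lemma basis_extend (y0 : 'I_r -> M) (t : nat) : is_basis alpha n y0 ->
  (j <= r)%N -> (t <= j)%N ->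
  exists2 y, is_basis alpha n y & forall i : 'I_r, (i < t)%N -> y i = z i.
Proof.
move=> hy0 jr; elim: t => [_|t IH tj]; first by exists y0.
have [y hy yz] := IH (ltnW tj).
pose T : 'I_r := Ordinal (leq_trans tj jr).
have [c zc] := hy.1 (z T).
have [p Tp alphaNc] := exists_coord_coprime (T := T) tj yz zc.
have := is_basis_exchange hMbar hPID halpha hy alphaNc; rewrite -zc => hy1.
exists ((fun i => if i == p then z T else y i) \o tperm p T).
  exact: is_basis_perm hy1.
move=> i; rewrite ltnS leq_eqVlt => /predU1P [iT | it] /=.
  by rewrite (_ : i = T) ?tpermR ?eqxx //; apply: val_inj.
have [pi Ti] : p != i /\ T != i.
  by split; apply/eqP => ie; move: it; rewrite -ie ?ltnn // ltnNge Tp.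
by rewrite tpermD // eq_sym (negPf pi) yz.
Qed.

Definition padded_exp (i : 'I_r) : nat := if (i < j)%N then nn i else 0.

Lemma padded_exp_leq (i : 'I_r) : (padded_exp i <= n)%N.
Proof. by rewrite /padded_exp; case: ifP => // /ann_exp_leq. Qed.

Lemma scaled_basis_sum (y : 'I_r -> M) : (forall i : 'I_r, (i < j)%N -> y i = z i) ->
  forall t : 'I_r -> D, \sum_i (t i * alpha ^+ (n - padded_exp i)) *: y i =
    \sum_(i < r | (i < j)%N) t i *: x i.
Proof.
move=> yz t; rewrite [RHS]big_mkcond; apply: eq_bigr => i _.
rewrite /padded_exp; case: ifP => ij; first by rewrite hz // yz // scalerA.
by rewrite subn0 -scalerA hMbar scaler0.
Qed.

End DirectSumInFreeModule.

Theorem lemma11 (D : idomainType) (hPID : is_PID D) (alpha : D)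
  (halpha : prime_elt alpha) (n : nat) (hn : (1 <= n)%N)
  (r j : nat) (hj1 : (1 <= j)%N) (hjr : (j <= r)%N)
  (M : lmodType D)
  (hMbar : forall m : M, alpha ^+ n *: m = 0)
  (e : 'I_r -> M)
  (he_span : forall m : M, exists c : 'I_r -> D, m = \sum_(i < r) c i *: e i)
  (he_indep : forall c : 'I_r -> D,
      \sum_(i < r) c i *: e i = 0 -> forall i, dvdD (alpha ^+ n) (c i))
  (x : 'I_r -> M) (nn : 'I_r -> nat)
  (hann : forall i : 'I_r, (i < j)%N ->
      forall d : D, d *: x i = 0 <-> dvdD (alpha ^+ nn i) d)
  (hann_proper : forall i : 'I_r, (i < j)%N -> ~ (forall d : D, d *: x i = 0))
  (hdirect : forall c : 'I_r -> D,
      \sum_(i < r | (i < j)%N) c i *: x i = 0 ->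
      forall i : 'I_r, (i < j)%N -> c i *: x i = 0) :
  exists (P : lmodType D) (f : {linear M -> P}) (g : {linear 'rV[D]_r -> P}),
    [/\ (forall p : P, exists m : M, f m = p),
        (forall m : M, f m = 0 <->
           exists c : 'I_r -> D, m = \sum_(i < r | (i < j)%N) c i *: x i),
        (forall p : P, exists v : 'rV[D]_r, g v = p) &
        (forall v : 'rV[D]_r, g v = 0 <->
           forall i : 'I_r,
             dvdD (alpha ^+ (n - (if (i < j)%N then nn i else 0%N))) (v ord0 i))].
Proof.
have alpha0 := prime_elt_neq0 halpha.
have he : is_basis alpha n e by split.
have /choice [z hz] : forall i : 'I_r, exists z, (i < j)%N -> x i = alpha ^+ (n - nn i) *: z.
  move=> i; case: (ltnP i j) => [ij | _]; last by exists 0.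
  have ann_x : alpha ^+ nn i *: x i = 0 by apply/(hann i ij)/dvdD_refl.
  by have [z ->] := basis_ann_exp alpha0 he (ann_exp_leq halpha hMbar hann ij) ann_x; exists z.
have [y hy yz] := basis_extend hPID halpha hMbar hann hann_proper hdirect hz he hjr (leqnn j).
have [P [f [g [f_surj f_ker g_surj g_ker]]]] :=
  scaled_basis_quotient hMbar alpha0 hy (padded_exp_leq halpha hMbar hann).
exists P, f, g; split=> // m; rewrite f_ker.
by split=> [[t ->] | [c ->]]; [exists t | exists c]; rewrite (scaled_basis_sum hMbar hz yz).
Qed.
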